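(* Let $\mathcal{Q}=\mathcal{Q}_\ell(T,X,Y)$ and let $\alpha\in\mathcal{Q}$. Then the $H^{\mathcal{P}}$-canonical form of $\alpha$ (in $\mathcal{P}_\ell(T,X)$) is a product of elements of $H^{\mathcal{Q}}$. Moreover, $H^{\mathcal{P}}\cap\mathcal{Q}=H^{\mathcal{Q}}$ and $X\cap\mathcal{Q}=Y$.
   Context: Let $T$ be a monoid, $X$ a semilattice with identity $1_X$ (ordered by $e\le f$ iff $ef=e$) with an order-preserving left action of $T$. $\mathcal{P}_\ell(T,X)$: let $T*X$ be the semigroup free product acting on $X$ (elements of $X$ act by multiplication), $\omega^+=\omega\cdot1_X$, $\sim$ the semigroup congruence generated by $\{(\alpha^+\alpha,\alpha)\}\cup\{(1_T,1_X)\}$, and $\mathcal{P}_\ell(T,X)=(T*X)/\sim$ with $[\alpha]^+=[\alpha^+]$; $X$, $T$ are identified with their injective images. It is a left Ehresmann monoid with projections $X$, unique $T$-normal forms $t_0e_1t_1\cdots e_nt_n$ ($n\ge0$, $e_i\in X\setminus\{1\}$, $t_1,\dots,t_{n-1}\in T\setminus\{1\}$, $e_i<(t_ie_{i+1}\cdots e_nt_n)^+$), and unary operation $a^*=e_n$ if $n\ge1$, $t_n=1$, and $a^*=1$ otherwise. $H^{\mathcal{P}}=\{te:t\in T,e\in X\}$; every element of $\mathcal{P}_\ell(T,X)$ has a unique $H^{\mathcal{P}}$-canonical form, i.e. expression $h_1\cdots h_n$, $h_i\in H^{\mathcal{P}}$, with $h_i^*<h_{i+1}^+$ ($1\le i<n$)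 and $h_i\notin X$ ($2\le i\le n$). Let $Y$ be a subsemilattice of $X$ having an identity, satisfying (A): for all $t\in T$, $e,f\in Y$ with $e\le f$, $t\cdot f\in Y$ implies $t\cdot e\in Y$; (B): for all $t\in T$ there is $g\in Y$ with $t\cdot g\in Y$. $H^{\mathcal{Q}}=\{te:t\in T,e\in Y,t\cdot e\in Y\}$, and $\mathcal{Q}_\ell(T,X,Y)$ is the subsemigroup of $\mathcal{P}_\ell(T,X)$ generated by $H^{\mathcal{Q}}$. *)

From Stdlib Require Import List.
Import ListNotations.

Record Data (T X : Type) := {
  tmul : T -> T -> T;
  tone : T;
  xmul : X -> X -> X;
  xone : X;
  act  : T -> X -> X
}.
Arguments tmul {T X}. Arguments tone {T X}. Arguments xmul {T X}.
Arguments xone {T X}. Arguments act {T X}.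

Section Defs.
Context {T X : Type} (D : Data T X).

Definition xle (e f : X) : Prop := xmul D e f = e.
Definition xlt (e f : X) : Prop := xle e f /\ e <> f.

Record Hyps : Prop := {
  tmulA : forall a b c, tmul D a (tmul D b c) = tmul D (tmul D a b) c;
  tmul1l : forall a, tmul D (tone D) a = a;
  tmul1r : forall a, tmul D a (tone D) = a;
  xmulA : forall a b c, xmul D a (xmul D b c) = xmul D (xmul D a b) c;
  xmulC : forall a b, xmul D a b = xmul D b a;
  xmulI : forall a, xmul D a a = a;
  xmul1l : forall a, xmul D (xone D) a = a;
  act1 : forall x, act D (tone D) x = x;
  actM : forall s t x, act D (tmul D s t) x = act D s (act D t x);
  act_mono : forall t e f, xle e f -> xle (act D t e) (act D t f)
}.

Definition SubSemilatticeWithId (Y : X -> Prop) : Prop :=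
  (forall e f, Y e -> Y f -> Y (xmul D e f)) /\
  (exists u, Y u /\ forall e, Y e -> xmul D u e = e).
Definition condA (Y : X -> Prop) : Prop :=
  forall t e f, Y e -> Y f -> xle e f -> Y (act D t f) -> Y (act D t e).
Definition condB (Y : X -> Prop) : Prop :=
  forall t, exists g, Y g /\ Y (act D t g).

(* Elements of the free product T*X are (nonempty) words; letters are
   inl t (t in T) and inr e (e in X).  Product = concatenation. *)
Definition letter := (T + X)%type.
Definition word := list letter.

Definition wact (w : word) (x : X) : X :=
  fold_right (fun l y => match l with inl t => act D t y | inr e => xmul D e y end) x w.
Definition wplus (w : word) : X := wact w (xone D).

(* generating pairs: free-product relations, (alpha^+ alpha, alpha), (1_T,1_X) *)
Inductive Pgen : word -> word -> Prop :=
| gen_T s t : Pgen [inl s; inl t] [inl (tmul D s t)]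
| gen_X e f : Pgen [inr e; inr f] [inr (xmul D e f)]
| gen_plus a : a <> [] -> Pgen (inr (wplus a) :: a) a
| gen_one : Pgen [inl (tone D)] [inr (xone D)].

(* the semigroup congruence generated; equality in P_l(T,X) *)
Inductive Peq : word -> word -> Prop :=
| Peq_ctx u a b v : Pgen a b -> Peq (u ++ a ++ v) (u ++ b ++ v)
| Peq_refl a : Peq a a
| Peq_sym a b : Peq a b -> Peq b a
| Peq_trans a b c : Peq a b -> Peq b c -> Peq a c.

Definition te (t : T) (e : X) : word := [inl t; inr e].

Definition inHP (a : word) : Prop := exists t e, Peq a (te t e).
Definition inHQ (Y : X -> Prop) (a : word) : Prop :=
  exists t e, Y e /\ Y (act D t e) /\ Peq a (te t e).
Definition inX (a : word) : Prop := exists x, Peq a [inr x].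

Definition inQ (Y : X -> Prop) (a : word) : Prop :=
  exists hs : list word, hs <> [] /\ Forall (inHQ Y) hs /\ Peq a (concat hs).

(* T-normal forms t0 e1 t1 ... en tn, encoded as t0 and [(e1,t1);...;(en,tn)] *)
Fixpoint nf_tail (l : list (X * T)) : word :=
  match l with [] => [] | (e, t) :: r => inr e :: inl t :: nf_tail r end.
Definition nf_word (t0 : T) (l : list (X * T)) : word := inl t0 :: nf_tail l.
Fixpoint nf_ok (l : list (X * T)) : Prop :=
  match l with
  | [] => True
  | (e, t) :: r =>
      e <> xone D /\ (r <> [] -> t <> tone D) /\
      xlt e (wplus (inl t :: nf_tail r)) /\ nf_ok r
  end.

Definition IsStar (a : word) (x : X) : Prop :=
  exists t0 l, nf_ok l /\ Peq a (nf_word t0 l) /\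
    ((l = [] /\ x = xone D) \/
     (exists l' e t, l = l' ++ [(e, t)] /\
        ((t = tone D /\ x = e) \/ (t <> tone D /\ x = xone D)))).

Definition HPCanonical (hs : list word) (a : word) : Prop :=
  hs <> [] /\ Forall inHP hs /\ Peq a (concat hs) /\
  (forall i, S i < length hs ->
     exists x, IsStar (nth i hs []) x /\ xlt x (wplus (nth (S i) hs []))) /\
  (forall i, 1 <= i < length hs -> ~ inX (nth i hs [])).

End Defs.

(* Words act on T-normal forms: a letter t of T multiplies t0 on the left,
   and a projection f multiplies by g = f (t0 e1 ...)^+, which is either
   absorbed or pushed to the front (absorbing e1 when t0 = 1).  The action
   respects the defining relations of P_l(T,X), so every element has a well
   defined normal form, and a normal form is its own.

   Multiplying by a factor t e of H^Q preserves the property that the normal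
   form splits as (t0 e1)(t1 e2)... with all factors in H^Q: condition (A)
   keeps t (e g) in Y, g being the plus of the rest.  An H^P-canonical form
   (t_1 e_1)...(t_n e_n) has normal form t_1 e_1 t_2 e_2 ... t_n e_n, so for
   an element of Q this splitting puts every t_i e_i in H^Q. *)
From Stdlib Require Import List ClassicalEpsilon Lia.
Import ListNotations.

Section NormalForms.
Variables (T X : Type) (D : Data T X).
Hypothesis HD : Hyps D.

Local Notation one := (xone D).
Local Notation tone := (tone D).
Local Notation meet := (xmul D).
Local Notation decide P := (excluded_middle_informative P).

Lemma meet1r x : meet x one = x.
Proof. rewrite (xmulC D HD). apply (xmul1l D HD). Qed.

Lemma xle_trans x y z : xle D x y -> xle D y z -> xle D x z.
Proof. unfold xle; intros Hxy Hyz. rewrite <- Hxy, <- (xmulA D HD), Hyz. reflexivity. Qed.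

Lemma xle_antisym x y : xle D x y -> xle D y x -> x = y.
Proof. unfold xle; intros Hxy Hyx. rewrite <- Hxy, (xmulC D HD). exact Hyx. Qed.

Lemma xle_meetl x y : xle D (meet x y) x.
Proof.
  unfold xle. rewrite <- (xmulA D HD), (xmulC D HD y x), (xmulA D HD), (xmulI D HD).
  reflexivity.
Qed.

Lemma xle_meetr x y : xle D (meet x y) y.
Proof. unfold xle. rewrite <- (xmulA D HD), (xmulI D HD). reflexivity. Qed.

Lemma xle_meet z x y : xle D z x -> xle D z y -> xle D z (meet x y).
Proof. unfold xle; intros Hx Hy. rewrite (xmulA D HD), Hx, Hy. reflexivity. Qed.

Lemma xle_one x : xle D x one.
Proof. apply meet1r. Qed.

Lemma xle_one_eq y : xle D one y -> y = one.
Proof. unfold xle. rewrite (xmul1l D HD). auto. Qed.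

Lemma wact_mono w x y : xle D x y -> xle D (wact D w x) (wact D w y).
Proof.
  induction w as [|[t|e] w IH]; intro Hxy; [exact Hxy| |]; simpl.
  - apply (act_mono D HD). auto.
  - apply xle_meet; [apply xle_meetl|].
    apply (xle_trans _ _ _ (xle_meetr _ _)). auto.
Qed.

(* (t0, [(e1,t1);...;(en,tn)]) stands for t0 e1 t1 ... en tn, as in [nf_word]. *)
Definition nform := (T * list (X * T))%type.

Fixpoint tail_plus (l : list (X * T)) : X :=
  match l with [] => one | (e, t) :: r => meet e (act D t (tail_plus r)) end.

Definition nf_plus (n : nform) : X := act D (fst n) (tail_plus (snd n)).

Definition nf_head (l : list (X * T)) : X :=
  match l with [] => one | (e, _) :: _ => e end.

(* When t0 = 1 the new projection g <= e1 replaces e1. *)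
Definition cons_proj (g : X) (t0 : T) (l : list (X * T)) : list (X * T) :=
  match l with
  | [] => [(g, t0)]
  | (_, t1) :: r => if decide (t0 = tone) then (g, t1) :: r else (g, t0) :: l
  end.

(* Left multiplication of a normal form n by a projection g <= n^+. *)
Definition nf_proj (g : X) (n : nform) : nform :=
  if decide (g = nf_plus n) then n else (tone, cons_proj g (fst n) (snd n)).

Definition nf_letter (c : letter) (n : nform) : nform :=
  match c with
  | inl s => (tmul D s (fst n), snd n)
  | inr f => nf_proj (meet f (nf_plus n)) n
  end.

Definition nf_act (w : word) (n : nform) : nform := fold_right nf_letter n w.

Definition nf_of (w : word) : nform := nf_act w (tone, []).

Lemma nf_proj_plus g n : g = nf_plus n -> nf_proj g n = n.
Proof. unfold nf_proj. destruct (decide _); congruence. Qed.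

Lemma nf_proj_cons g n :
  g <> nf_plus n -> nf_proj g n = (tone, cons_proj g (fst n) (snd n)).
Proof. unfold nf_proj. destruct (decide _); congruence. Qed.

Lemma cons_proj_fresh g t0 l :
  (l <> [] -> t0 <> tone) -> cons_proj g t0 l = (g, t0) :: l.
Proof.
  intro Ht0. destruct l as [|[e1 t1] r]; [reflexivity|]. simpl.
  destruct (decide _) as [E|_]; [|reflexivity].
  exfalso. apply Ht0; [discriminate|exact E].
Qed.

Lemma cons_proj_twice g h t0 l :
  cons_proj g tone (cons_proj h t0 l) = cons_proj g t0 l.
Proof.
  destruct l as [|[e1 t1] r]; simpl; [destruct (decide _); congruence|].
  destruct (decide (t0 = tone)); simpl; destruct (decide _); congruence.
Qed.

Lemma nf_head_cons_proj g t0 l : nf_head (cons_proj g t0 l) = g.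
Proof. destruct l as [|[e1 t1] r]; simpl; [|destruct (decide _)]; reflexivity. Qed.

Lemma tail_plus_cons_proj g t0 l :
  xle D g (nf_plus (t0, l)) -> tail_plus (cons_proj g t0 l) = g.
Proof.
  unfold nf_plus; simpl. intro Hg.
  destruct l as [|[e1 t1] r]; simpl in *; [exact Hg|].
  destruct (decide (t0 = tone)) as [->|]; simpl; [|exact Hg].
  rewrite (act1 D HD) in Hg. exact (xle_trans _ _ _ Hg (xle_meetr _ _)).
Qed.

Lemma nf_plus_proj g n : xle D g (nf_plus n) -> nf_plus (nf_proj g n) = g.
Proof.
  intro Hg. destruct (decide (g = nf_plus n)) as [E|NE].
  - rewrite nf_proj_plus by exact E. auto.
  - rewrite nf_proj_cons by exact NE. unfold nf_plus at 1; simpl.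
    rewrite (act1 D HD). destruct n as [t0 l]. apply tail_plus_cons_proj, Hg.
Qed.

Lemma nf_proj_proj g h n :
  xle D h (nf_plus n) -> xle D g h -> nf_proj g (nf_proj h n) = nf_proj g n.
Proof.
  intros Hh Hg. destruct (decide (h = nf_plus n)) as [E|NE].
  { rewrite (nf_proj_plus h n E). reflexivity. }
  destruct (decide (g = h)) as [->|NEg].
  { apply nf_proj_plus. symmetry. apply nf_plus_proj, Hh. }
  assert (NEn : g <> nf_plus n).
  { intro E. apply NE, xle_antisym; [exact Hh|]. rewrite <- E. exact Hg. }
  rewrite (nf_proj_cons g n NEn), nf_proj_cons.
  - rewrite nf_proj_cons by exact NE. simpl. rewrite cons_proj_twice. reflexivity.
  - rewrite nf_plus_proj by exact Hh. exact NEg.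
Qed.

Lemma nf_plus_act w n : nf_plus (nf_act w n) = wact D w (nf_plus n).
Proof.
  induction w as [|[s|f] w IH]; [reflexivity| |]; simpl; rewrite <- IH.
  - unfold nf_plus; simpl. apply (actM D HD).
  - apply nf_plus_proj, xle_meetr.
Qed.

Lemma nf_act_app u v n : nf_act (u ++ v) n = nf_act u (nf_act v n).
Proof. apply fold_right_app. Qed.

Lemma nf_letter_absorb f n : xle D (nf_plus n) f -> nf_letter (inr f) n = n.
Proof. intro H. simpl. apply nf_proj_plus. rewrite (xmulC D HD). exact H. Qed.

Lemma nf_act_Pgen a b n : Pgen D a b -> nf_act a n = nf_act b n.
Proof.
  destruct 1 as [s t|e f|a _|]; cbn [nf_act fold_right].
  - simpl. rewrite (tmulA D HD). reflexivity.
  - simpl. rewrite nf_plus_proj, nf_proj_proj, (xmulA D HD) by apply xle_meetr.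
    reflexivity.
  - apply nf_letter_absorb. rewrite nf_plus_act. apply wact_mono, xle_one.
  - rewrite nf_letter_absorb by apply xle_one.
    destruct n. simpl. rewrite (tmul1l D HD). reflexivity.
Qed.

Lemma nf_act_Peq a b n : Peq D a b -> nf_act a n = nf_act b n.
Proof.
  intro H. revert n. induction H as [u a b v Hg| | |]; intro n.
  - rewrite !nf_act_app, (nf_act_Pgen _ _ _ Hg). reflexivity.
  - reflexivity.
  - auto.
  - congruence.
Qed.

Lemma nf_of_Peq a b : Peq D a b -> nf_of a = nf_of b.
Proof. apply nf_act_Peq. Qed.

Lemma nf_of_app u v : nf_of (u ++ v) = nf_act u (nf_of v).
Proof. apply nf_act_app. Qed.

Lemma wplus_nf_of w : wplus D w = nf_plus (nf_of w).
Proof.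
  unfold nf_of. rewrite nf_plus_act. unfold nf_plus; simpl. rewrite (act1 D HD).
  reflexivity.
Qed.

Lemma wplus_Peq a b : Peq D a b -> wplus D a = wplus D b.
Proof. intro H. rewrite !wplus_nf_of, (nf_of_Peq _ _ H). reflexivity. Qed.

Lemma wplus_te t e : wplus D (te t e) = act D t e.
Proof. unfold wplus; simpl. rewrite meet1r. reflexivity. Qed.

Lemma tail_plus_nf_of w : tail_plus (snd (nf_of w)) = nf_head (snd (nf_of w)).
Proof.
  unfold nf_of. induction w as [|[s|f] w IH]; [reflexivity| |]; simpl; [exact IH|].
  set (n := nf_act w (tone, [])) in *.
  destruct (decide (meet f (nf_plus n) = nf_plus n)) as [E|NE].
  - rewrite nf_proj_plus by exact E. exact IH.
  - rewrite nf_proj_cons by exact NE. simpl.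
    rewrite nf_head_cons_proj. destruct n as [t0 l].
    apply tail_plus_cons_proj, xle_meetr.
Qed.

Lemma nf_plus_nf_of w :
  nf_plus (nf_of w) = act D (fst (nf_of w)) (nf_head (snd (nf_of w))).
Proof. unfold nf_plus. rewrite tail_plus_nf_of. reflexivity. Qed.

Lemma nf_letter_fresh e n :
  xlt D e (nf_plus n) -> (snd n <> [] -> fst n <> tone) ->
  nf_letter (inr e) n = (tone, (e, fst n) :: snd n).
Proof.
  intros [Hle Hne] Hn. simpl. rewrite Hle, nf_proj_cons by exact Hne.
  rewrite cons_proj_fresh by exact Hn. reflexivity.
Qed.

Lemma nf_act_te_fresh t e n :
  xlt D e (nf_plus n) -> (snd n <> [] -> fst n <> tone) ->
  nf_act (te t e) n = (t, (e, fst n) :: snd n).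
Proof.
  intros He Hn. cbn [nf_act te fold_right]. rewrite (nf_letter_fresh e n He Hn). simpl.
  rewrite (tmul1r D HD). reflexivity.
Qed.

Lemma nf_of_te_one t : nf_of (te t one) = (t, []).
Proof.
  unfold nf_of. cbn [nf_act te fold_right]. rewrite nf_letter_absorb by apply xle_one.
  simpl. rewrite (tmul1r D HD). reflexivity.
Qed.

Lemma nf_of_te t e : e <> one -> nf_of (te t e) = (t, [(e, tone)]).
Proof.
  intro He. apply nf_act_te_fresh; [|simpl; congruence].
  unfold nf_plus; simpl. rewrite (act1 D HD). split; [apply xle_one|exact He].
Qed.

Lemma nf_head_nf_of_te t e :
  fst (nf_of (te t e)) = t /\ nf_head (snd (nf_of (te t e))) = e.
Proof.
  destruct (classic (e = one)) as [->|He];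
    [rewrite nf_of_te_one|rewrite nf_of_te by exact He]; auto.
Qed.

Lemma wact_nf_tail l : wact D (nf_tail l) one = tail_plus l.
Proof. induction l as [|[e t] r IH]; simpl; [|rewrite IH]; reflexivity. Qed.

Lemma nf_of_nf_word t0 l : nf_ok D l -> nf_of (nf_word t0 l) = (t0, l).
Proof.
  intro Hok.
  assert (Htail : nf_act (nf_tail l) (tone, []) = (tone, l)).
  { induction l as [|[e t] r IH]; [reflexivity|].
    destruct Hok as (_ & Ht & Hlt & Hr). simpl. rewrite (IH Hr). simpl.
    rewrite (tmul1r D HD). apply nf_letter_fresh; [|exact Ht].
    unfold wplus in Hlt; simpl in Hlt. rewrite wact_nf_tail in Hlt. exact Hlt. }
  unfold nf_of, nf_word. simpl. rewrite Htail. simpl. rewrite (tmul1r D HD). reflexivity.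
Qed.

Lemma te_one_Peq e : Peq D (te tone e) [inr e].
Proof.
  eapply Peq_trans.
  - exact (Peq_ctx D [] [inl tone] [inr one] [inr e] (gen_one D)).
  - pose proof (Peq_ctx D [] [inr one; inr e] [inr (meet one e)] [] (gen_X D one e)) as H.
    simpl in H. rewrite (xmul1l D HD) in H. exact H.
Qed.

Lemma IsStar_te h t e x :
  IsStar D h x -> Peq D h (te t e) -> (e = one -> x = one) /\ (e <> one -> x = e).
Proof.
  intros (t0 & l & Hok & Hpeq & Hx) Hh.
  assert (E : nf_of (te t e) = (t0, l)).
  { rewrite <- (nf_of_Peq _ _ Hh), (nf_of_Peq _ _ Hpeq). apply nf_of_nf_word, Hok. }
  split; intro He.
  - subst e. rewrite nf_of_te_one in E. injection E as <- <-.
    destruct Hx as [[_ Hx]|(l' & e2 & t2 & Hl & _)]; [exact Hx|].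
    destruct l'; discriminate.
  - rewrite nf_of_te in E by exact He. injection E as <- <-.
    destruct Hx as [[Hl _]|(l' & e2 & t2 & Hl & Hx)]; [discriminate|].
    destruct l' as [|? [|]]; simpl in Hl; try discriminate.
    injection Hl as <- <-.
    destruct Hx as [[_ Hx]|[Hne _]]; [exact Hx|congruence].
Qed.

Lemma canonical_adjacent h h' x t e t' e' :
  IsStar D h x -> xlt D x (wplus D h') -> ~ inX D h' ->
  Peq D h (te t e) -> Peq D h' (te t' e') ->
  xlt D e (act D t' e') /\ t' <> tone.
Proof.
  intros Hx Hlt HnX Hh Hh'.
  rewrite (wplus_Peq _ _ Hh'), wplus_te in Hlt.
  destruct (IsStar_te _ _ _ _ Hx Hh) as [Hone Hfresh].
  split.
  - destruct (classic (e = one)) as [E|NE].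
    + rewrite (Hone E) in Hlt. destruct Hlt as [Hle Hne].
      exfalso. apply Hne. symmetry. apply xle_one_eq, Hle.
    + rewrite <- (Hfresh NE). exact Hlt.
  - intros ->. apply HnX. exists e'. exact (Peq_trans D _ _ _ Hh' (te_one_Peq e')).
Qed.

Definition canonical_chain (hs : list word) : Prop :=
  Forall (inHP D) hs /\
  (forall i, S i < length hs ->
     exists x, IsStar D (nth i hs []) x /\ xlt D x (wplus D (nth (S i) hs []))) /\
  (forall i, 1 <= i < length hs -> ~ inX D (nth i hs [])).

Lemma canonical_chain_tail h hs : canonical_chain (h :: hs) -> canonical_chain hs.
Proof.
  intros (HF & Hadj & HnX). split; [|split].
  - inversion HF; assumption.
  - intros i Hi. apply (Hadj (S i)). simpl. lia.
  - intros i Hi. apply (HnX (S i)). simpl. lia.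
Qed.

Lemma HPCanonical_chain hs a :
  HPCanonical D hs a <-> hs <> [] /\ canonical_chain hs /\ Peq D a (concat hs).
Proof. unfold HPCanonical, canonical_chain. tauto. Qed.

Section HQProducts.
Variable Y : X -> Prop.
Hypothesis Y_meet : forall e f, Y e -> Y f -> Y (meet e f).
Hypothesis HA : condA D Y.

(* [Qsplit t0 l]: the normal form t0 e1 t1 ... en tn is the product
   (t0 e1)(t1 e2)...(t_{n-1} en)(tn 1) of elements of H^Q, the last factor
   being dropped when tn = 1. *)
Fixpoint Qsplit (t0 : T) (l : list (X * T)) : Prop :=
  match l with
  | [] => Y one /\ Y (act D t0 one)
  | (e, t) :: r => Y e /\ Y (act D t0 e) /\ ((t = tone /\ r = []) \/ Qsplit t r)
  end.

Definition Qnf (n : nform) : Prop := Qsplit (fst n) (snd n).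

Lemma Qsplit_head t0 l : Qsplit t0 l -> Y (nf_head l) /\ Y (act D t0 (nf_head l)).
Proof. destruct l as [|[e t] r]; simpl; tauto. Qed.

Lemma Qsplit_act t t0 l :
  Qsplit t0 l -> Y (act D t (act D t0 (nf_head l))) -> Qsplit (tmul D t t0) l.
Proof. destruct l as [|[e t1] r]; simpl; rewrite (actM D HD); tauto. Qed.

Lemma Qsplit_cons_proj g t t0 l :
  Y g -> Y (act D t g) -> Qsplit t0 l -> Qsplit t (cons_proj g t0 l).
Proof.
  intros Yg Ytg Hl. destruct l as [|[e1 t1] r]; simpl; [tauto|].
  destruct (decide (t0 = tone)); simpl in *; tauto.
Qed.

Lemma Qnf_nf_of_te t e : Y e -> Y (act D t e) -> Qnf (nf_of (te t e)).
Proof.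
  intros Ye Yte. destruct (classic (e = one)) as [->|He].
  - rewrite nf_of_te_one. unfold Qnf; simpl. tauto.
  - rewrite nf_of_te by exact He. unfold Qnf; simpl. tauto.
Qed.

Lemma Qnf_te_act t e w :
  Y e -> Y (act D t e) -> Qnf (nf_of w) -> Qnf (nf_act (te t e) (nf_of w)).
Proof.
  intros Ye Yte HQ.
  pose proof (nf_plus_nf_of w) as Hp.
  destruct (nf_of w) as [t0 l]; simpl in Hp. unfold Qnf in HQ; simpl in HQ.
  destruct (Qsplit_head _ _ HQ) as [_ Yp]. rewrite <- Hp in Yp.
  set (g := meet e (nf_plus (t0, l))).
  assert (Yg : Y g) by (apply Y_meet; assumption).
  assert (Ytg : Y (act D t g)) by (apply (HA t g e); auto; apply xle_meetl).
  cbn [nf_act te fold_right]. unfold nf_letter at 2. fold g.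
  destruct (decide (g = nf_plus (t0, l))) as [E|NE].
  - rewrite (nf_proj_plus g _ E). unfold Qnf; simpl.
    apply Qsplit_act; [exact HQ|]. rewrite <- Hp, <- E. exact Ytg.
  - rewrite (nf_proj_cons g _ NE). unfold Qnf; simpl. rewrite (tmul1r D HD).
    apply Qsplit_cons_proj; assumption.
Qed.

Lemma Qnf_HQ_product gs : gs <> [] -> Forall (inHQ D Y) gs -> Qnf (nf_of (concat gs)).
Proof.
  induction gs as [|g gs IH]; intros Hne HF; [congruence|].
  inversion HF as [|? ? (t & e & Ye & Yte & Hg) HF']; subst.
  simpl concat. rewrite nf_of_app, (nf_act_Peq _ _ _ Hg).
  destruct gs as [|g' gs'].
  - apply Qnf_nf_of_te; assumption.
  - apply Qnf_te_act; [assumption|assumption|]. apply IH; [discriminate|exact HF'].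
Qed.

Lemma nf_of_canonical hs t e :
  hs <> [] -> canonical_chain hs -> Peq D (hd [] hs) (te t e) ->
  exists L, nf_of (concat hs) = (t, L) /\ nf_head L = e /\
    (Qsplit t L -> Forall (inHQ D Y) hs).
Proof.
  revert t e. induction hs as [|h hs IH]; intros t e Hne Hchain Hh; [congruence|].
  simpl hd in Hh. destruct hs as [|h' rest].
  - simpl concat. rewrite app_nil_r, (nf_of_Peq _ _ Hh).
    destruct (nf_head_nf_of_te t e) as [Ht He].
    destruct (nf_of (te t e)) as [t0 L]; simpl in Ht, He; subst t0.
    exists L. split; [reflexivity|]. split; [exact He|].
    intro HQ. destruct (Qsplit_head _ _ HQ) as [Ye Yte]. rewrite He in Ye, Yte.
    repeat constructor. exists t, e. auto.
  - destruct Hchain as (HF & Hadj & HnX).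
    assert (Hh' : inHP D h') by (inversion HF as [|? ? _ HF']; inversion HF'; assumption).
    destruct Hh' as (t' & e' & Hh').
    destruct (IH t' e') as (L1 & Hev & Hhead & HQrest);
      [discriminate|apply (canonical_chain_tail h); split; auto|exact Hh'|].
    destruct (Hadj 0) as (x & Hx & Hlt); [simpl; lia|].
    destruct (canonical_adjacent h h' x t e t' e') as [Hlt' Ht']; auto.
    { apply (HnX 1). simpl. lia. }
    assert (Hp : nf_plus (t', L1) = act D t' e').
    { pose proof (nf_plus_nf_of (concat (h' :: rest))) as Hp.
      rewrite Hev in Hp. simpl in Hp. rewrite Hp, Hhead. reflexivity. }
    exists ((e, t') :: L1). split; [|split; [reflexivity|]].
    + change (concat (h :: h' :: rest)) with (h ++ concat (h' :: rest)).
      rewrite nf_of_app, Hev, (nf_act_Peq _ _ _ Hh).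
      apply (nf_act_te_fresh t e (t', L1)); [rewrite Hp; exact Hlt'|auto].
    + simpl. intros (Ye & Yte & Htail). constructor.
      * exists t, e. auto.
      * apply HQrest. destruct Htail as [[E _]|Htail]; [contradiction|exact Htail].
Qed.

Lemma HQ_of_canonical a hs :
  inQ D Y a -> HPCanonical D hs a -> Forall (inHQ D Y) hs.
Proof.
  intros (gs & Hgs & HFg & Hag) Hcan.
  apply HPCanonical_chain in Hcan as (Hhs & Hchain & Hah).
  assert (HQ : Qnf (nf_of (concat hs))).
  { rewrite <- (nf_of_Peq _ _ Hah), (nf_of_Peq _ _ Hag). apply Qnf_HQ_product; assumption. }
  destruct hs as [|h hs']; [congruence|].
  destruct Hchain as [HF Hlinks]. inversion HF as [|? ? (t & e & Hh) _]; subst.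
  destruct (nf_of_canonical (h :: hs') t e) as (L & Hev & _ & HQL);
    [exact Hhs|split; assumption|exact Hh|].
  rewrite Hev in HQ. exact (HQL HQ).
Qed.

Lemma Y_of_inQ x : inQ D Y [inr x] -> Y x.
Proof.
  intros (gs & Hgs & HFg & Hag).
  pose proof (Qnf_HQ_product gs Hgs HFg) as HQ.
  rewrite <- (nf_of_Peq _ _ Hag), <- (nf_of_Peq _ _ (te_one_Peq x)) in HQ.
  destruct (nf_head_nf_of_te tone x) as [_ Hx].
  destruct (nf_of (te tone x)) as [t0 L]. unfold Qnf in HQ; simpl in *.
  rewrite <- Hx. apply (Qsplit_head _ _ HQ).
Qed.

Lemma inHQ_proj x : Y x -> inHQ D Y [inr x].
Proof.
  intro Yx. exists tone, x. rewrite (act1 D HD).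
  repeat split; [exact Yx|exact Yx|apply Peq_sym, te_one_Peq].
Qed.

End HQProducts.

End NormalForms.

Lemma inQ_of_HQ (T X : Type) (D : Data T X) (Y : X -> Prop) a :
  inHQ D Y a -> inQ D Y a.
Proof.
  intro Ha. exists [a]. split; [discriminate|]. split; [repeat constructor; exact Ha|].
  simpl. rewrite app_nil_r. apply Peq_refl.
Qed.

Lemma HPCanonical_singleton (T X : Type) (D : Data T X) a :
  inHP D a -> HPCanonical D [a] a.
Proof.
  intro Ha. split; [discriminate|]. split; [repeat constructor; exact Ha|].
  split; [simpl; rewrite app_nil_r; apply Peq_refl|].
  split; intros i Hi; simpl in Hi; lia.
Qed.

Theorem mainTheorem15 (T X : Type) (D : Data T X) (HD : Hyps D)
  (Y : X -> Prop) (HY : SubSemilatticeWithId D Y)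
  (HA : condA D Y) (HB : condB D Y) :
  (forall (a : word) (hs : list word),
      inQ D Y a -> HPCanonical D hs a -> Forall (inHQ D Y) hs) /\
  (forall a : word, (inHP D a /\ inQ D Y a) <-> inHQ D Y a) /\
  (forall x : X, inQ D Y [inr x] <-> Y x).
Proof.
  destruct HY as [Y_meet _].
  pose proof (HQ_of_canonical T X D HD Y Y_meet HA) as Hcan.
  split; [exact Hcan|split].
  - intro a. split.
    + intros [HPa HQa].
      pose proof (Hcan a [a] HQa (HPCanonical_singleton T X D a HPa)) as H.
      inversion H. assumption.
    + intro Ha. split; [|apply inQ_of_HQ, Ha].
      destruct Ha as (t & e & _ & _ & H). exists t, e. exact H.
  - intro x. split; [apply (Y_of_inQ T X D HD Y Y_meet HA)|].
    intro Yx. apply inQ_of_HQ, (inHQ_proj T X D HD Y x Yx).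
Qed.
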